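(* Under the standing setting and assumptions (A1)–(A3) described in the context, assume $\mathcal A$ is star-shaped and $\mathcal A\cap\ker(\pi)=\{0\}$ (absence of good deals). Then $\mathcal R(X)\neq\emptyset$ for every $X\in\mathcal X$.
   Context: Let $\mathcal X$ be a Hausdorff, first countable, locally convex topological vector space over $\mathbb R$, partially ordered by a partial order $\geq$ with positive cone $\mathcal X_+=\{X\in\mathcal X: X\geq 0\}$. Let $\mathcal M\subset\mathcal X$ be a vector subspace with $1<\dim\mathcal M<\infty$, carrying the relative topology, and let $\pi:\mathcal M\to\mathbb R$ be linear with $\ker(\pi)=\{Z\in\mathcal M:\pi(Z)=0\}$. Standing assumptions: (A1) there is $U\in\mathcal M\cap\mathcal X_+$ with $\pi(U)=1$; (A2) $\mathcal A\subsetneq\mathcal X$ is closed, contains $0$, and satisfies $\mathcal A+\mathcal X_+\subset\mathcal A$; (A3) the map $\rho(X)=\inf\{\pi(Z): Z\in\mathcal M,\ X+Z\in\mathcal A\}$ is finitely valued and continuous on $\mathcal X$. The optimal payoff map is $\mathcal R(X)=\{Z\in\mathcal M: X+Z\in\mathcal A,\ \pi(Z)=\rho(X)\}$. $\mathcal A$ is star-shaped if $X\in\mathcal A$ implies $\lambda X\in\mathcal A$ for all $\lambda\in[0,1]$. *)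

From HB Require Import structures.
From mathcomp Require Import all_boot all_order all_algebra.
From mathcomp Require Import all_classical all_reals all_analysis.
Set Implicit Arguments. Unset Strict Implicit. Unset Printing Implicit Defensive.
Import Order.TTheory GRing.Theory Num.Theory.
Local Open Scope classical_set_scope.
Local Open Scope ring_scope.

Definition first_countable (T : topologicalType) : Prop :=
  forall x : T, exists B : nat -> set T,
    (forall n, nbhs x (B n)) /\ (forall U, nbhs x U -> exists n, B n `<=` U).

Definition partial_order_on (E : Type) (le : E -> E -> Prop) : Prop :=
  (forall x, le x x) /\ (forall x y, le x y -> le y x -> x = y) /\
  (forall x y z, le x y -> le y z -> le x z).

Definition is_subspace (R : numDomainType) (E : lmodType R) (M : set E) : Prop :=
  M 0 /\ (forall x y, M x -> M y -> M (x + y)) /\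
  (forall (a : R) x, M x -> M (a *: x)).

Definition has_dim (R : numDomainType) (E : lmodType R) (M : set E) (n : nat) : Prop :=
  exists b : 'I_n -> E,
    (forall c : 'I_n -> R, \sum_(i < n) c i *: b i = 0 -> forall i, c i = 0) /\
    M = [set x | exists c : 'I_n -> R, x = \sum_(i < n) c i *: b i].

Definition linear_on (R : numDomainType) (E : lmodType R) (M : set E) (pi : E -> R) : Prop :=
  (forall x y, M x -> M y -> pi (x + y) = pi x + pi y) /\
  (forall (a : R) x, M x -> pi (a *: x) = a * pi x).

Definition costs (R : realType) (E : lmodType R) (M A : set E) (pi : E -> R) (X : E) : set R :=
  [set pi Z | Z in [set Z | M Z /\ A (X + Z)]].

Definition rho (R : realType) (E : lmodType R) (M A : set E) (pi : E -> R) (X : E) : R :=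
  inf (costs M A pi X).

Definition optR (R : realType) (E : lmodType R) (M A : set E) (pi : E -> R) (X : E) : set E :=
  [set Z | M Z /\ A (X + Z) /\ pi Z = rho M A pi X].

Definition star_shaped (R : realType) (E : lmodType R) (A : set E) : Prop :=
  forall X (l : R), A X -> 0 <= l <= 1 -> A (l *: X).

From HB Require Import structures.
From mathcomp Require Import all_boot all_order all_algebra.
From mathcomp Require Import all_classical all_reals all_analysis.
From mathcomp Require Import lra.
Import Order.TTheory GRing.Theory Num.Theory numFieldTopology.Exports.
Local Open Scope classical_set_scope.
Local Open Scope ring_scope.

(* Fix a basis b of M and write payoffs as L d = sum_i d_i b_i, d in R^n, so that
   the price pi (L d) = f d is linear in d.  For fixed X and C, rescaling a feasible
   d (X + L d in A, |f d| <= C, |d| >= 1) by t = 1/|d| gives a point (t, d/|d|) of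
   the compact set K of pairs (t, u) with t in [0, 1], |u| = 1, t X + L u in A and
   |f u| <= t C; this uses star-shapedness of A.  A point with t = 0 would be a
   good deal L u, so t is bounded below on K by some t0 > 0 and |d| <= 1/t0.
   Hence the feasible coordinates with price below a given feasible one form a
   compact set, on which the continuous price f attains its minimum rho(X). *)

Section TvsContinuity.
Context {R : numFieldType} {E : tvsType R} {T : topologicalType}.

Lemma tvs_continuousD (f g : T -> E) :
  continuous f -> continuous g -> continuous (f \+ g).
Proof.
move=> cf cg x.
apply: (@continuous2_cvg _ E E E _ _ f g +%R _ _ _ (cf x) (cg x)).
exact: (@add_continuous E (f x, g x)).
Qed.

Lemma tvs_continuousZ (s : T -> R) (f : T -> E) :
  continuous s -> continuous f -> continuous (fun x => s x *: f x).
Proof.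
move=> cs cf x; apply: (@continuous2_cvg _ R^o E E _ _ s f _ _ _ _ (cs x) (cf x)).
exact: (@scale_continuous R E (s x, f x)).
Qed.

Lemma tvs_continuous_sum (I : Type) (r : seq I) (F : I -> T -> E) :
  (forall i, continuous (F i)) -> continuous (fun x => \sum_(i <- r) F i x).
Proof.
move=> cF; elim: r => [|i r IHr].
  under eq_fun do rewrite big_nil; exact: cst_continuous.
under eq_fun do rewrite big_cons; exact: tvs_continuousD.
Qed.

End TvsContinuity.

Section LinearCombination.
Context {R : numDomainType} {E : lmodType R} {n : nat} (b : 'I_n -> E).

Definition lincomb (d : 'rV[R]_n) : E := \sum_(i < n) d ord0 i *: b i.

Lemma lincombZ (a : R) (d : 'rV[R]_n) : lincomb (a *: d) = a *: lincomb d.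
Proof. by rewrite /lincomb scaler_sumr; apply: eq_bigr => i _; rewrite mxE scalerA. Qed.

Lemma lincomb_delta (i : 'I_n) : lincomb (delta_mx 0 i) = b i.
Proof.
rewrite /lincomb (bigD1 i) //= mxE !eqxx scale1r big1 ?addr0 // => j /negbTE ji.
by rewrite mxE ji andbF scale0r.
Qed.

End LinearCombination.

Lemma lincomb_continuous {R : numFieldType} {E : tvsType R} {n : nat} (b : 'I_n -> E) :
  continuous (lincomb b).
Proof.
apply: tvs_continuous_sum => i.
by apply: tvs_continuousZ; [exact: coord_continuous | exact: cst_continuous].
Qed.

Lemma has_dim_lincomb {R : numDomainType} {E : lmodType R} {M : set E} {n : nat} :
  has_dim M n ->
  exists b : 'I_n -> E, (forall d, lincomb b d = 0 -> d = 0) /\ M = range (lincomb b).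
Proof.
move=> [b [b_free ->]]; exists b; split.
  by move=> d /b_free d0; apply/rowP => i; rewrite !mxE d0.
apply/seteqP; split => [_ [c ->] | _ [d _ <-]]; last by exists (fun i => d ord0 i).
by exists (\row_i c i) => //; apply: eq_bigr => i _; rewrite mxE.
Qed.

Section LinearOnSubspace.
Context {R : numDomainType} {E : lmodType R} {M : set E} {price : E -> R}.
Hypotheses (M_sub : is_subspace M) (price_lin : linear_on M price).

Lemma linear_on_sum (I : Type) (r : seq I) (c : I -> R) (x : I -> E) :
  (forall i, M (x i)) ->
  price (\sum_(i <- r) c i *: x i) = \sum_(i <- r) c i * price (x i).
Proof.
have [M0 [MD MZ]] := M_sub; have [priceD priceZ] := price_lin; move=> Mx.
have price0 : price 0 = 0 by rewrite -(scale0r 0) priceZ ?mul0r.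
suff [] : M (\sum_(i <- r) c i *: x i) /\
          price (\sum_(i <- r) c i *: x i) = \sum_(i <- r) c i * price (x i) by [].
apply: (big_ind2 (fun y z => M y /\ price y = z)) => [|y1 z1 y2 z2 [My1 <-] [My2 <-]|i _].
- by rewrite price0.
- by split; [exact: MD | exact: priceD].
- by split; [exact: MZ | exact: priceZ].
Qed.

End LinearOnSubspace.

Section FeasibleCoordinates.
Context {R : realType} {E : tvsType R} {n : nat}.
Context {L : 'rV[R]_n -> E} {f : 'rV[R]_n -> R} {A : set E}.
Hypotheses (L_continuous : continuous L) (f_continuous : continuous f).
Hypotheses (LZ : forall a d, L (a *: d) = a *: L d) (fZ : forall a d, f (a *: d) = a * f d).
Hypotheses (A_closed : closed A) (A_star : star_shaped A).
Hypothesis no_recession : forall u, A (L u) -> f u = 0 -> u = 0.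

Let fst_continuous : continuous (@fst R 'rV[R]_n).
Proof. by move=> z; exact: cvg_fst. Qed.

Let snd_continuous : continuous (@snd R 'rV[R]_n).
Proof. by move=> z; exact: cvg_snd. Qed.

Let unit_sphere_compact : compact [set u : 'rV[R]_n | `|u| = 1].
Proof.
apply: bounded_closed_compact.
  by exists 1; split => // r r_gt1 u /= ->; exact: ltW.
apply: (@preimage_closed _ _ (fun u : 'rV[R]_n => `|u|) [set x : R | x = 1]).
  by move=> u _; exact: norm_continuous.
exact: closed_eq.
Qed.

Section NormalizedFeasible.
Variables (X : E) (C : R).

Let normalized_feasible : set (R * 'rV[R]_n) :=
  `[0, 1] `*` [set u | `|u| = 1]
  `&` (fun z => z.1 *: X + L z.2) @^-1` A
  `&` (fun z => z.1 * C - `|f z.2|) @^-1` [set x | 0 <= x].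

Let normalized_feasible_compact : compact normalized_feasible.
Proof.
apply: compact_closedI; last first.
  apply: preimage_closed; last exact: closed_ge.
  move=> z _.
  apply: (@continuousB R R^o _ (fun z : R * 'rV[R]_n => z.1 * C) (fun z => `|f z.2|) z).
    by apply: (@continuousM _ _ fst (cst C)); [exact: fst_continuous | exact: cst_continuous].
  apply: (@continuous_comp _ _ _ snd (fun d => `|f d|) z (snd_continuous z)).
  exact: (continuous_comp (f_continuous z.2) (@norm_continuous _ R^o _)).
apply: compact_closedI; last first.
  apply: preimage_closed A_closed => z _; apply: tvs_continuousD.
    by apply: tvs_continuousZ; [exact: fst_continuous | exact: cst_continuous].
  by move=> y; exact: (continuous_comp (snd_continuous y) (L_continuous y.2)).
by apply: compact_setX; [exact: segment_compact | exact: unit_sphere_compact].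
Qed.

Let normalize_feasible d : A (X + L d) -> `|f d| <= C -> 1 <= `|d| ->
  normalized_feasible (`|d|^-1, `|d|^-1 *: d).
Proof.
move=> Ad fdC d_ge1; have d_gt0 : 0 < `|d| by exact: lt_le_trans d_ge1.
have inv_ge0 : 0 <= `|d|^-1 by rewrite invr_ge0 ltW.
have inv_le1 : `|d|^-1 <= 1 by rewrite invf_le1.
split; [split; [split|] |] => /=.
- by rewrite in_itv /= inv_ge0 inv_le1.
- by rewrite normrZ ger0_norm // mulVf // gt_eqF.
- by rewrite LZ -scalerDr; apply: A_star; rewrite ?inv_ge0.
- by rewrite fZ normrM ger0_norm // subr_ge0 ler_wpM2l.
Qed.

Let normalized_feasible_neq0 z : normalized_feasible z -> z.1 != 0.
Proof.
case: z => t u [[[_ u1] Atu] tC] /=; apply: contra_eq_neq u1 => t0.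
move: Atu tC; rewrite /= t0 scale0r add0r mul0r sub0r oppr_ge0 normr_le0.
by move=> /no_recession Lu0 /eqP /Lu0 ->; rewrite normr0 eq_sym oner_eq0.
Qed.

Lemma feasible_bounded :
  exists B : R, forall d, A (X + L d) -> `|f d| <= C -> `|d| <= B.
Proof.
have [t0 t0_gt0 t0_min] :
    exists2 t0 : R, 0 < t0 & forall z, normalized_feasible z -> t0 <= z.1.
  have [[z Kz]|K0] := pselect (normalized_feasible !=set0); last first.
    by exists 1 => // z Kz; exfalso; apply: K0; exists z.
  have [z0 /set_mem K_z0 z0_min] := compact_EVT_min (ex_intro _ z Kz)
    normalized_feasible_compact (continuous_subspaceT fst_continuous).
  exists z0.1 => [|y Ky]; last by apply: z0_min; rewrite inE.
  have [[[z0_unit _] _] _] := K_z0.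
  rewrite lt_def normalized_feasible_neq0 //=.
  by move: z0_unit => /=; rewrite in_itv => /andP[].
exists (Num.max 1 t0^-1) => d Ad fdC; rewrite le_max.
have [//|d_gt1] := leP `|d| 1.
have /t0_min /= t0_le := normalize_feasible d Ad fdC (ltW d_gt1).
by rewrite -[`|d|]invrK lef_pV2 ?t0_le ?orbT // posrE invr_gt0 (lt_trans ltr01).
Qed.

End NormalizedFeasible.

Lemma feasible_cost_min (X : E) :
  (exists d, A (X + L d)) -> has_lbound (f @` [set d | A (X + L d)]) ->
  exists2 c, A (X + L c) & forall d, A (X + L d) -> f c <= f d.
Proof.
move=> [d1 Ad1] [r r_lb].
pose S := [set d | A (X + L d) /\ f d <= f d1].
have S_cost_bounded d : S d -> `|f d| <= `|r| + `|f d1|.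
  move=> [Ad fd]; have r_le : r <= f d by apply: r_lb; exists d.
  have := normr_ge0 r; have := normr_ge0 (f d1).
  have := ler_norm (f d1); have := ler_norm (- r); rewrite normrN => ? ? ? ?.
  by rewrite ler_norml; apply/andP; split; lra.
have [B S_le_B] := feasible_bounded X (`|r| + `|f d1|).
have S_compact : compact S.
  apply: bounded_closed_compact.
    exists B; split; first exact: num_real.
    move=> B' B_lt d Sd /=; apply: le_trans (ltW B_lt).
    exact: S_le_B (proj1 Sd) (S_cost_bounded d Sd).
  apply: closedI.
    apply: (@preimage_closed _ _ (fun d => X + L d) A) A_closed => d _.
    by apply: tvs_continuousD; [exact: cst_continuous | exact: L_continuous].
  apply: (@preimage_closed _ _ f [set x | x <= f d1]); last exact: closed_le.
  by move=> d _; exact: f_continuous.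
have [c /set_mem [Ac fc] c_min] := compact_EVT_min (ex_intro _ d1 (conj Ad1 (lexx _)))
  S_compact (continuous_subspaceT f_continuous).
exists c => // d Ad; have [fd_le|fd_gt] := leP (f d) (f d1).
  by apply: c_min; rewrite inE.
exact: le_trans fc (ltW fd_gt).
Qed.

End FeasibleCoordinates.

Lemma inf_eq_min {R : realType} {S : set R} {x : R} : S x -> lbound S x -> inf S = x.
Proof.
move=> Sx x_lb; apply/le_anti; rewrite lb_le_inf ?andbT //; last by exists x.
by apply: ge_inf Sx; exists x.
Qed.

Theorem mainTheorem9 (R : realType) (E : tvsType R)
  (le : E -> E -> Prop) (M A : set E) (pi : E -> R) :
  hausdorff_space E ->
  first_countable E ->
  partial_order_on le ->
  is_subspace M ->
  (exists n, (1 < n)%N /\ has_dim M n) ->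
  linear_on M pi ->
  (* (A1) *)
  (exists U, M U /\ le 0 U /\ pi U = 1) ->
  (* (A2) *)
  closed A -> A 0 -> A <> setT ->
  (forall X P, A X -> le 0 P -> A (X + P)) ->
  (* (A3) *)
  (forall X, (costs M A pi X !=set0) /\ has_lbound (costs M A pi X)) ->
  continuous (fun x : E => rho M A pi x) ->
  (* star-shaped, no good deals *)
  star_shaped A ->
  (forall Z, M Z -> A Z -> pi Z = 0 -> Z = 0) ->
  forall X : E, optR M A pi X !=set0.
Proof.
move=> _ _ _ M_sub [n [_ /has_dim_lincomb [b [b_free M_range]]]] pi_lin _ A_closed _ _ _
  rho_finite _ A_star no_good_deal X.
pose L := lincomb b; pose f : 'rV[R]_n -> R := @lincomb R R^o n (pi \o b).
have ML d : M (L d) by rewrite M_range; exists d.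
have piL d : pi (L d) = f d.
  rewrite /L /f /lincomb (linear_on_sum M_sub pi_lin) // => i.
  by rewrite -lincomb_delta; exact: ML.
have costsE : costs M A pi X = f @` [set d | A (X + L d)].
  rewrite /costs {1}M_range; apply/seteqP; split.
    by move=> _ [_ [[d _ <-] AXd] <-]; exists d; rewrite ?piL.
  by move=> _ [d AXd <-]; exists (L d); rewrite ?piL.
have [costs_ne cost_lb] := rho_finite X; rewrite costsE in costs_ne cost_lb.
have [_ [d0 AXd0 _]] := costs_ne.
have no_recession u : A (L u) -> f u = 0 -> u = 0.
  by move=> ALu fu0; apply/b_free/no_good_deal; rewrite ?piL.
have [c AXc c_min] := feasible_cost_min (lincomb_continuous b) (lincomb_continuous (pi \o b))
  (lincombZ b) (lincombZ (pi \o b)) A_closed A_star no_recession X (ex_intro _ d0 AXd0) cost_lb.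
exists (L c); split; [exact: ML | split => //].
rewrite /rho costsE piL; apply/esym/inf_eq_min; first by exists c.
by move=> _ [d AXd <-]; exact: c_min.
Qed.
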